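(* Let $N,\mu,\beta,\sigma,\gamma,p>0$ and $0<\rho<1$ and consider the system $$S'=\mu N-\tfrac{\beta(1-\rho)}{N}SI-\tfrac{p}{N}S-\mu S,\qquad E'=\tfrac{\beta(1-\rho)}{N}SI-(\sigma+\mu)E,\qquad I'=\sigma E-(\gamma+\mu)I$$ on $\Omega=\{(S,E,I)\in\mathbb{R}_+^3: S+E+I\le N\}$. Let $\mathcal{R}_0=\dfrac{\mu N\sigma\beta(1-\rho)}{(\sigma+\mu)(\gamma+\mu)(p+\mu N)}$. If $\mathcal{R}_0>1$, then the disease-free equilibrium $\left(\frac{\mu N^2}{p+\mu N},0,0\right)$ is not an $\omega$-limit point of any orbit starting in the interior of $\Omega$.
   Context: $(S,E,I)$-subsystem of an SEIR model with vaccination rate $p$ and birth/death rate $\mu$. The $\omega$-limit set of a solution $x(\cdot)$ is $\{y:\exists t_n\to+\infty,\ x(t_n)\to y\}$. *)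

From Stdlib Require Import Reals.
From Coquelicot Require Import Coquelicot.
Open Scope R_scope.

Definition is_SEI_solution (N mu beta sigma gamma p rho : R)
  (S E I : R -> R) : Prop :=
  filterlim S (at_right 0) (locally (S 0)) /\
  filterlim E (at_right 0) (locally (E 0)) /\
  filterlim I (at_right 0) (locally (I 0)) /\
  forall t, 0 < t ->
    is_derive S t (mu * N - beta * (1 - rho) / N * S t * I t - p / N * S t - mu * S t) /\
    is_derive E t (beta * (1 - rho) / N * S t * I t - (sigma + mu) * E t) /\
    is_derive I t (sigma * E t - (gamma + mu) * I t).

Definition in_interior_Omega (N S E I : R) : Prop :=
  0 < S /\ 0 < E /\ 0 < I /\ S + E + I < N.

Definition omega_limit_point (S E I : R -> R) (y1 y2 y3 : R) : Prop :=
  exists tn : nat -> R,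
    is_lim_seq tn p_infty /\
    is_lim_seq (fun n => S (tn n)) y1 /\
    is_lim_seq (fun n => E (tn n)) y2 /\
    is_lim_seq (fun n => I (tn n)) y3.

Definition basic_repro_number (N mu beta sigma gamma p rho : R) : R :=
  mu * N * sigma * beta * (1 - rho) / ((sigma + mu) * (gamma + mu) * (p + mu * N)).

(* Write a := beta (1 - rho) / N, k := p / N + mu and
   c := (sigma + mu) (gamma + mu) / (sigma a).  The infected mass
   V := sigma E + (sigma + mu) I satisfies V' = sigma a I (S - c), and R0 = (mu N / k) / c,
   where mu N / k = mu N^2 / (p + mu N) is the disease-free value of S; so R0 > 1 means
   that c lies strictly below it.  Solutions starting in the interior stay positive, hence
   V' >= -(gamma + mu) V: V decays at most exponentially.  If V(t) were very small, take
   the last time tau <= t with S(tau) <= c.  V does not decrease on [tau, t], so V, and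
   with it I, was already small on a window of length T before tau; but while I <= dl,
   S' >= mu N - (a dl + k) S pushes S above c within time T, contradicting S(tau) <= c.
   Thus V stays above some eps > 0 along the orbit, whereas it would tend to 0 along any
   sequence of times converging to a point with E = I = 0. *)

From Stdlib Require Import Reals Lra Classical.
From Coquelicot Require Import Coquelicot.
Open Scope R_scope.

Definition right_continuous (f : R -> R) (a : R) : Prop :=
  filterlim f (at_right a) (locally (f a)).

Lemma continuous_right_continuous (f : R -> R) a :
  continuous f a -> right_continuous f a.
Proof.
  intro Hf. eapply filterlim_filter_le_1; [apply filter_le_within | exact Hf].
Qed.

Lemma derive_continuous (f : R -> R) x l : is_derive f x l -> continuous f x.
Proof. intro Hf. apply (ex_derive_continuous f). exists l; exact Hf. Qed.

Lemma derive_right_continuous (f : R -> R) a l :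
  is_derive f a l -> right_continuous f a.
Proof. intro Hf. apply continuous_right_continuous, (derive_continuous f a l Hf). Qed.

Lemma right_continuous_plus (f g : R -> R) a :
  right_continuous f a -> right_continuous g a ->
  right_continuous (fun t => f t + g t) a.
Proof.
  intros Hf Hg. eapply filterlim_comp_2; [exact Hf | exact Hg |].
  apply (filterlim_plus (V := R_NormedModule)).
Qed.

Lemma right_continuous_mult (f g : R -> R) a :
  right_continuous f a -> right_continuous g a ->
  right_continuous (fun t => f t * g t) a.
Proof.
  intros Hf Hg. eapply filterlim_comp_2; [exact Hf | exact Hg |].
  apply (filterlim_mult (K := R_AbsRing)).
Qed.

Lemma right_continuous_const c a : right_continuous (fun _ => c) a.
Proof. apply filterlim_const. Qed.

Lemma at_right_interval a (P : R -> Prop) :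
  at_right a P -> exists d, 0 < d /\ forall u, a < u < a + d -> P u.
Proof.
  intros [d Hd]. exists d. split; [apply cond_pos |].
  intros u Hu. apply Hd; [| lra].
  change (Rabs (u - a) < d). rewrite Rabs_right; lra.
Qed.

Lemma le_of_derive_nonneg (f df : R -> R) a b :
  a <= b -> right_continuous f a ->
  (forall x, a < x <= b -> is_derive f x (df x)) ->
  (forall x, a < x <= b -> 0 <= df x) ->
  f a <= f b.
Proof.
  intros Hab Hrc Hd Hpos.
  assert (Hinner : forall x, a < x < b -> f x <= f b).
  { intros x Hx.
    destruct (MVT_gen f x b df) as [y [Hy Heq]];
      rewrite ?Rmin_left, ?Rmax_right in * by lra.
    - intros y Hy. apply Hd; lra.
    - intros y Hy. apply continuity_pt_filterlim, (derive_continuous f y (df y)), Hd.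
      lra.
    - pose proof (Hpos y ltac:(lra)). nra. }
  destruct (Rle_lt_dec (f a) (f b)) as [| Hlt]; [assumption | exfalso].
  destruct (Req_dec a b) as [<- | Hne]; [lra |].
  destruct (at_right_interval a _ (Hrc _ (open_gt (f b) (f a) Hlt)))
    as [d [Hd0 Hnear]].
  pose proof (Rmin_l d (b - a)). pose proof (Rmin_r d (b - a)).
  pose proof (Rmin_pos d (b - a) Hd0 ltac:(lra)).
  set (u := a + Rmin d (b - a) / 2).
  pose proof (Hnear u ltac:(unfold u; lra)).
  pose proof (Hinner u ltac:(unfold u; lra)).
  lra.
Qed.

Lemma linear_diff_ineq (f df : R -> R) k L a b :
  a <= b -> right_continuous f a ->
  (forall x, a < x <= b -> is_derive f x (df x)) ->
  (forall x, a < x <= b -> 0 <= df x + k * (f x - L)) ->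
  f a - L <= (f b - L) * exp (k * (b - a)).
Proof.
  intros Hab Hrc Hd Hineq.
  assert (Hexp : forall x, is_derive (fun t => exp (k * t)) x (k * exp (k * x))).
  { intro x. auto_derive; [exact I | ring]. }
  assert (Hmono : (f a - L) * exp (k * a) <= (f b - L) * exp (k * b)).
  { apply (le_of_derive_nonneg (fun t => (f t - L) * exp (k * t))
             (fun x => (df x + k * (f x - L)) * exp (k * x))); [assumption | | |].
    - apply right_continuous_mult.
      + apply right_continuous_plus; [assumption | apply right_continuous_const].
      + exact (derive_right_continuous _ a _ (Hexp a)).
    - intros x Hx.
      assert (Hf : is_derive (fun t => f t - L) x (df x - 0)).
      { apply (is_derive_minus (V := R_NormedModule) f (fun _ => L)); [apply Hd; lra |].
        apply (is_derive_const (K := R_AbsRing) (V := R_NormedModule)). }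
      replace ((df x + k * (f x - L)) * exp (k * x))
        with ((df x - 0) * exp (k * x) + (f x - L) * (k * exp (k * x))) by ring.
      exact (is_derive_mult _ _ x _ _ Hf (Hexp x) Rmult_comm).
    - intros x Hx. apply Rmult_le_pos; [apply Hineq; lra | apply Rlt_le, exp_pos]. }
  replace (k * b) with (k * a + k * (b - a)) in Hmono by ring.
  rewrite exp_plus in Hmono.
  apply (Rmult_le_reg_r (exp (k * a))); [apply exp_pos | lra].
Qed.

Lemma pos_of_linear_diff_ineq (f df : R -> R) k a b :
  a <= b -> right_continuous f a ->
  (forall x, a < x <= b -> is_derive f x (df x)) ->
  (forall x, a < x <= b -> 0 <= df x + k * f x) ->
  0 < f a -> 0 < f b.
Proof.
  intros Hab Hrc Hd Hineq Ha.
  assert (H : f a - 0 <= (f b - 0) * exp (k * (b - a))).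
  { apply (linear_diff_ineq f df); try assumption.
    intros x Hx. rewrite Rminus_0_r. auto. }
  pose proof (exp_pos (k * (b - a))). nra.
Qed.

Lemma derive_pos_left_lt (f : R -> R) a m l :
  a < m -> is_derive f m l -> 0 < l -> exists u, a < u < m /\ f u < f m.
Proof.
  intros Ham Hd Hl. apply is_derive_Reals in Hd.
  destruct (Hd (l / 2)) as [d Hdd]; [lra |].
  pose proof (cond_pos d).
  pose proof (Rmin_l d (m - a)). pose proof (Rmin_r d (m - a)).
  pose proof (Rmin_pos d (m - a) ltac:(lra) ltac:(lra)).
  set (h := - (Rmin d (m - a) / 2)).
  specialize (Hdd h ltac:(unfold h; lra)).
  rewrite Rabs_left in Hdd by (unfold h; lra).
  specialize (Hdd ltac:(unfold h; lra)).
  apply Rabs_def2 in Hdd.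
  exists (m + h). split; [unfold h; lra |].
  set (q := (f (m + h) - f m) / h) in Hdd.
  replace (f (m + h)) with (f m + q * h) by (unfold q; field; unfold h; lra).
  assert (h < 0) by (unfold h; lra). nra.
Qed.

Lemma nonneg_of_pos_left (f : R -> R) a m :
  a < m -> continuous f m -> (forall u, a < u < m -> 0 < f u) -> 0 <= f m.
Proof.
  intros Ham Hf Hpos. apply Rnot_lt_le. intro Hneg.
  destruct (Hf _ (open_lt 0 (f m) Hneg)) as [d Hd].
  pose proof (cond_pos d).
  pose proof (Rmin_l d (m - a)). pose proof (Rmin_r d (m - a)).
  pose proof (Rmin_pos d (m - a) ltac:(lra) ltac:(lra)).
  set (u := m - Rmin d (m - a) / 2).
  assert (f u < 0).
  { apply Hd. change (Rabs (u - m) < d). unfold u. rewrite Rabs_left; lra. }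
  assert (0 < f u) by (apply Hpos; unfold u; lra).
  lra.
Qed.

Lemma real_induction (P : R -> Prop) a :
  (forall m, a <= m -> (forall u, a <= u < m -> P u) -> P m) ->
  (forall m, a <= m -> P m -> at_right m P) ->
  forall t, a <= t -> P t.
Proof.
  intros Hstep Hright t Ht.
  set (A := fun s => a <= s <= t /\ forall u, a <= u <= s -> P u).
  assert (HAa : A a).
  { split; [lra |]. intros u Hu. replace u with a by lra.
    apply Hstep; [lra | intros; lra]. }
  destruct (completeness A) as [m [Hub Hlub]].
  { exists t. intros s Hs. apply Hs. }
  { exists a. exact HAa. }
  assert (Ham : a <= m) by (apply Hub, HAa).
  assert (Hmt : m <= t) by (apply Hlub; intros s Hs; apply Hs).
  assert (Hbelow : forall u, a <= u < m -> P u).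
  { intros u Hu. apply NNPP. intro HPu.
    assert (m <= u); [| lra].
    apply Hlub. intros s [Hs Hall]. apply Rnot_lt_le. intro Hus.
    apply HPu, Hall. lra. }
  assert (HPm : P m) by (apply Hstep; assumption).
  destruct (Req_dec m t) as [<- | Hne]; [assumption | exfalso].
  destruct (at_right_interval m P (Hright m Ham HPm)) as [d [Hd Hnear]].
  set (s := Rmin (m + d / 2) t).
  assert (s <= m + d / 2) by apply Rmin_l.
  assert (s <= t) by apply Rmin_r.
  assert (Hms : m < s) by (apply Rmin_glb_lt; lra).
  assert (A s).
  { split; [lra |]. intros u Hu.
    destruct (Rtotal_order u m) as [Hum | [-> | Hum]];
      [apply Hbelow; lra | assumption | apply Hnear; lra]. }
  assert (s <= m) by (apply Hub; assumption).
  lra.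
Qed.

Lemma last_nonpos_time (h : R -> R) a t :
  (forall x, a < x <= t -> continuous h x) ->
  (exists s, a <= s <= t /\ h s <= 0) ->
  exists tau, a <= tau <= t /\ h tau <= 0 /\ forall u, tau < u <= t -> 0 < h u.
Proof.
  intros Hc [s0 [Hs0 Hhs0]].
  set (B := fun s => a <= s <= t /\ h s <= 0).
  destruct (completeness B) as [m [Hub Hlub]].
  { exists t. intros s Hs. apply Hs. }
  { exists s0. split; assumption. }
  assert (Hs0m : s0 <= m) by (apply Hub; split; assumption).
  assert (Hmt : m <= t) by (apply Hlub; intros s Hs; apply Hs).
  exists m. split; [lra |]. split.
  - apply Rnot_lt_le. intro Hpos.
    destruct (Req_dec m a) as [Hma | Hma].
    { assert (s0 = m) by lra. subst. lra. }
    destruct (Hc m ltac:(lra) _ (open_gt 0 (h m) Hpos)) as [d Hd].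
    pose proof (cond_pos d).
    assert (m <= m - d / 2); [| lra].
    apply Hlub. intros s [Hs Hhs]. apply Rnot_lt_le. intro Hlt.
    assert (s <= m) by (apply Hub; split; assumption).
    assert (0 < h s); [| lra].
    apply Hd. change (Rabs (s - m) < d). rewrite Rabs_left1; lra.
  - intros u Hu. apply Rnot_le_lt. intro Hle.
    assert (u <= m) by (apply Hub; split; [lra | assumption]).
    lra.
Qed.

Lemma right_continuous_of_derive_pos (f : R -> R) :
  right_continuous f 0 -> (forall t, 0 < t -> exists l, is_derive f t l) ->
  forall t, 0 <= t -> right_continuous f t.
Proof.
  intros H0 Hd t Ht.
  destruct (Req_dec t 0) as [-> | Ht0]; [assumption |].
  destruct (Hd t ltac:(lra)) as [l Hl].
  exact (derive_right_continuous f t l Hl).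
Qed.

Section SEI_system.

Variables N mu beta sigma gamma p rho : R.
Hypotheses (hN : 0 < N) (hmu : 0 < mu) (hbeta : 0 < beta) (hsigma : 0 < sigma)
  (hgamma : 0 < gamma) (hp : 0 < p) (hrho1 : rho < 1).
Variables S E I : R -> R.
Hypothesis hsol : is_SEI_solution N mu beta sigma gamma p rho S E I.

Let a := beta * (1 - rho) / N.
Let k := p / N + mu.
Let b := (sigma + mu) * (gamma + mu).
Let c := b / (sigma * a).

Lemma a_pos : 0 < a.
Proof. unfold a. apply Rdiv_lt_0_compat; [apply Rmult_lt_0_compat |]; lra. Qed.

Lemma k_pos : 0 < k.
Proof. unfold k. assert (0 < p / N) by (apply Rdiv_lt_0_compat; lra). lra. Qed.

Lemma c_spec : sigma * a * c = b.
Proof. unfold c. pose proof a_pos. field. split; lra. Qed.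

Lemma c_pos : 0 < c.
Proof.
  unfold c, b. pose proof a_pos.
  apply Rdiv_lt_0_compat; apply Rmult_lt_0_compat; lra.
Qed.

Lemma basic_repro_number_eq :
  basic_repro_number N mu beta sigma gamma p rho = mu * N / k / c.
Proof.
  unfold basic_repro_number, c, b, a, k.
  field. repeat split; nra.
Qed.

Lemma S_derive t : 0 < t ->
  is_derive S t (mu * N - a * S t * I t - p / N * S t - mu * S t).
Proof. intro Ht. apply (proj2 (proj2 (proj2 hsol)) t Ht). Qed.

Lemma E_derive t : 0 < t -> is_derive E t (a * S t * I t - (sigma + mu) * E t).
Proof. intro Ht. apply (proj2 (proj2 (proj2 hsol)) t Ht). Qed.

Lemma I_derive t : 0 < t -> is_derive I t (sigma * E t - (gamma + mu) * I t).
Proof. intro Ht. apply (proj2 (proj2 (proj2 hsol)) t Ht). Qed.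

Lemma S_right_continuous t : 0 <= t -> right_continuous S t.
Proof.
  apply right_continuous_of_derive_pos; [apply hsol |].
  intros u Hu. eexists. apply S_derive, Hu.
Qed.

Lemma E_right_continuous t : 0 <= t -> right_continuous E t.
Proof.
  apply right_continuous_of_derive_pos; [apply hsol |].
  intros u Hu. eexists. apply E_derive, Hu.
Qed.

Lemma I_right_continuous t : 0 <= t -> right_continuous I t.
Proof.
  apply right_continuous_of_derive_pos; [apply hsol |].
  intros u Hu. eexists. apply I_derive, Hu.
Qed.

Hypotheses (hS0 : 0 < S 0) (hE0 : 0 < E 0) (hI0 : 0 < I 0).

Lemma SEI_positive_step m :
  0 < m -> (forall u, 0 <= u < m -> 0 < S u /\ 0 < E u /\ 0 < I u) ->
  0 < S m /\ 0 < E m /\ 0 < I m.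
Proof.
  intros Hm Hbelow. pose proof a_pos.
  assert (Hnn_m : 0 <= S m /\ 0 <= E m /\ 0 <= I m).
  { repeat split; apply (nonneg_of_pos_left _ 0 m Hm);
      try (intros u Hu; apply Hbelow; lra);
      eapply derive_continuous;
      [apply S_derive | apply E_derive | apply I_derive]; exact Hm. }
  assert (Hnn : forall x, 0 < x <= m -> 0 <= S x /\ 0 <= E x /\ 0 <= I x).
  { intros x Hx. destruct (Req_dec x m) as [-> | Hxm]; [assumption |].
    destruct (Hbelow x) as [? [? ?]]; [lra |]. lra. }
  repeat split.
  - (* S m = 0 would give S'(m) = mu N > 0, so S < 0 just before m *)
    destruct (proj1 Hnn_m) as [| HSm]; [assumption | exfalso].
    destruct (derive_pos_left_lt S 0 m _ Hm (S_derive m Hm)) as [u [Hu HSu]].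
    { rewrite <- HSm. nra. }
    destruct (Hbelow u ltac:(lra)) as [? _]. lra.
  - apply (pos_of_linear_diff_ineq E (fun x => a * S x * I x - (sigma + mu) * E x)
             (sigma + mu) 0 m); try lra.
    + apply E_right_continuous; lra.
    + intros x Hx. apply E_derive; lra.
    + intros x Hx. destruct (Hnn x Hx) as [? [? ?]].
      replace (a * S x * I x - (sigma + mu) * E x + (sigma + mu) * E x)
        with (a * S x * I x) by ring.
      apply Rmult_le_pos; [apply Rmult_le_pos |]; lra.
  - apply (pos_of_linear_diff_ineq I (fun x => sigma * E x - (gamma + mu) * I x)
             (gamma + mu) 0 m); try lra.
    + apply I_right_continuous; lra.
    + intros x Hx. apply I_derive; lra.
    + intros x Hx. destruct (Hnn x Hx) as [? [? ?]].
      replace (sigma * E x - (gamma + mu) * I x + (gamma + mu) * I x)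
        with (sigma * E x) by ring.
      apply Rmult_le_pos; lra.
Qed.

Lemma SEI_positive t : 0 <= t -> 0 < S t /\ 0 < E t /\ 0 < I t.
Proof.
  revert t. apply (real_induction (fun t => 0 < S t /\ 0 < E t /\ 0 < I t)).
  - intros m Hm Hbelow.
    destruct (Req_dec m 0) as [-> | Hm0]; [auto |].
    apply SEI_positive_step; [lra | assumption].
  - intros m Hm [HSm [HEm HIm]].
    pose proof (S_right_continuous m Hm _ (open_gt 0 (S m) HSm)).
    pose proof (E_right_continuous m Hm _ (open_gt 0 (E m) HEm)).
    pose proof (I_right_continuous m Hm _ (open_gt 0 (I m) HIm)).
    repeat (apply filter_and; try assumption).
Qed.

Let V t := sigma * E t + (sigma + mu) * I t.

Lemma V_derive t : 0 < t -> is_derive V t (I t * (sigma * a * S t - b)).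
Proof.
  intro Ht. unfold V.
  replace (I t * (sigma * a * S t - b))
    with (sigma * (a * S t * I t - (sigma + mu) * E t)
          + (sigma + mu) * (sigma * E t - (gamma + mu) * I t)) by (unfold b; ring).
  apply (is_derive_plus (V := R_NormedModule)
           (fun t => sigma * E t) (fun t => (sigma + mu) * I t));
    apply is_derive_scal; [apply E_derive | apply I_derive]; assumption.
Qed.

Lemma V_right_continuous t : 0 <= t -> right_continuous V t.
Proof.
  intro Ht. unfold V.
  apply right_continuous_plus; apply right_continuous_mult;
    auto using right_continuous_const, E_right_continuous, I_right_continuous.
Qed.

Lemma V_backward_bound u v T :
  0 <= u <= v -> v - u <= T -> V u <= V v * exp ((gamma + mu) * T).
Proof.
  intros Huv HT. pose proof a_pos.
  assert (Hcmp : V u - 0 <= (V v - 0) * exp ((gamma + mu) * (v - u))).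
  { apply (linear_diff_ineq V (fun x => I x * (sigma * a * S x - b))); try lra.
    - apply V_right_continuous; lra.
    - intros x Hx. apply V_derive; lra.
    - intros x Hx. destruct (SEI_positive x ltac:(lra)) as [? [? ?]].
      replace (I x * (sigma * a * S x - b) + (gamma + mu) * (V x - 0))
        with (sigma * a * S x * I x + (gamma + mu) * sigma * E x)
        by (unfold V, b; ring).
      assert (0 <= sigma * a * S x * I x)
        by (apply Rmult_le_pos; [apply Rmult_le_pos; [apply Rmult_le_pos |] |]; lra).
      assert (0 <= (gamma + mu) * sigma * E x)
        by (apply Rmult_le_pos; [apply Rmult_le_pos |]; lra).
      lra. }
  rewrite !Rminus_0_r in Hcmp.
  assert (Hexp : exp ((gamma + mu) * (v - u)) <= exp ((gamma + mu) * T)).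
  { destruct (Rle_lt_or_eq_dec ((gamma + mu) * (v - u)) ((gamma + mu) * T))
      as [Hlt | ->]; [nra | apply Rlt_le, exp_increasing, Hlt | lra]. }
  destruct (SEI_positive v ltac:(lra)) as [? [? ?]].
  assert (0 <= V v) by (unfold V; nra).
  apply Rle_trans with (1 := Hcmp). apply Rmult_le_compat_l; assumption.
Qed.

Lemma V_nondecreasing u v :
  0 <= u <= v -> (forall x, u < x <= v -> c <= S x) -> V u <= V v.
Proof.
  intros Huv HS. pose proof a_pos.
  apply (le_of_derive_nonneg V (fun x => I x * (sigma * a * S x - b))); try lra.
  - apply V_right_continuous; lra.
  - intros x Hx. apply V_derive; lra.
  - intros x Hx. destruct (SEI_positive x ltac:(lra)) as [_ [_ HIx]].
    apply Rmult_le_pos; [lra |]. rewrite <- c_spec.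
    assert (sigma * a * c <= sigma * a * S x); [| lra].
    apply Rmult_le_compat_l; [nra | apply HS; lra].
Qed.

(* While I <= dl, S' >= mu N - (a dl + k) S, whose equilibrium is S_floor dl.  The
   recovery time solves (S_floor dl - c) (a dl + k) T = S_floor dl: by exp x >= 1 + x,
   S <= c at the end of such a window would make S negative at its start. *)
Let S_floor dl := mu * N / (a * dl + k).
Let recovery_time dl := S_floor dl / ((S_floor dl - c) * (a * dl + k)).

Lemma recovery_time_nonneg dl : 0 <= dl -> c < S_floor dl -> 0 <= recovery_time dl.
Proof.
  intros Hdl Hc. pose proof a_pos. pose proof k_pos. pose proof c_pos.
  apply Rlt_le, Rdiv_lt_0_compat; [lra | apply Rmult_lt_0_compat; nra].
Qed.

Lemma S_recovers dl u :
  0 <= dl -> c < S_floor dl -> 0 <= u ->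
  (forall x, u < x <= u + recovery_time dl -> I x <= dl) ->
  c < S (u + recovery_time dl).
Proof.
  intros Hdl Hc Hu HI.
  pose proof a_pos. pose proof k_pos.
  assert (Hk2 : 0 < a * dl + k) by nra.
  assert (HSs : (a * dl + k) * S_floor dl = mu * N) by (unfold S_floor; field; lra).
  assert (HT : (S_floor dl - c) * ((a * dl + k) * recovery_time dl) = S_floor dl)
    by (unfold recovery_time; field; split; lra).
  pose proof (recovery_time_nonneg dl Hdl Hc) as HT0.
  set (k2 := a * dl + k) in *. set (Ss := S_floor dl) in *.
  set (T := recovery_time dl) in *.
  apply Rnot_le_lt. intro Hle.
  assert (Hcmp : S u - Ss <= (S (u + T) - Ss) * exp (k2 * (u + T - u))).
  { apply (linear_diff_ineq S (fun x => mu * N - a * S x * I x - p / N * S x - mu * S x));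
      try lra.
    - apply S_right_continuous; lra.
    - intros x Hx. apply S_derive; lra.
    - intros x Hx. destruct (SEI_positive x ltac:(lra)) as [HSx _].
      specialize (HI x Hx).
      replace (mu * N - a * S x * I x - p / N * S x - mu * S x + k2 * (S x - Ss))
        with (a * S x * (dl - I x) + (mu * N - k2 * Ss)) by (unfold k2, k; ring).
      rewrite HSs. assert (0 <= a * S x * (dl - I x)) by
        (apply Rmult_le_pos; [apply Rmult_le_pos |]; lra).
      lra. }
  replace (u + T - u) with T in Hcmp by ring.
  assert (H1 : (S (u + T) - Ss) * exp (k2 * T) <= (c - Ss) * exp (k2 * T))
    by (apply Rmult_le_compat_r; [apply Rlt_le, exp_pos | lra]).
  assert (H2 : (c - Ss) * exp (k2 * T) <= (c - Ss) * (1 + k2 * T))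
    by (apply Rmult_le_compat_neg_l; [lra | apply exp_ineq1_le]).
  destruct (SEI_positive u Hu) as [HSu _].
  lra.
Qed.

Lemma S_floor_above_threshold :
  basic_repro_number N mu beta sigma gamma p rho > 1 ->
  exists dl, 0 < dl /\ c < S_floor dl.
Proof.
  intro hR0. rewrite basic_repro_number_eq in hR0.
  pose proof a_pos. pose proof k_pos. pose proof c_pos.
  assert (Hck : c * k < mu * N).
  { apply Rgt_lt, (Rmult_lt_compat_r (c * k)) in hR0; [| nra].
    replace (mu * N / k / c * (c * k)) with (mu * N) in hR0 by (field; lra). lra. }
  assert (Hk : k < mu * N / c) by (apply (Rlt_div_r k (mu * N) c); lra).
  exists ((mu * N / c - k) / (2 * a)). split.
  - apply Rdiv_lt_0_compat; lra.
  - unfold S_floor.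
    replace (a * ((mu * N / c - k) / (2 * a)) + k) with ((mu * N / c + k) / 2)
      by (field; lra).
    apply (Rlt_div_r c (mu * N) ((mu * N / c + k) / 2)); [lra |].
    replace (c * ((mu * N / c + k) / 2)) with ((mu * N + c * k) / 2) by (field; lra).
    lra.
Qed.

Lemma SEI_persistence :
  basic_repro_number N mu beta sigma gamma p rho > 1 ->
  exists eps, 0 < eps /\ forall t, 0 <= t -> eps <= V t.
Proof.
  intro hR0.
  destruct (S_floor_above_threshold hR0) as [dl [Hdl Hc]].
  pose proof (recovery_time_nonneg dl (Rlt_le _ _ Hdl) Hc) as HT0.
  set (T := recovery_time dl) in *.
  (* below this bound V forces I <= dl, and V 0 cannot be reached *)
  set (bound := Rmin ((sigma + mu) * dl) (V 0 / 2)).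
  assert (HV0 : 0 < V 0) by (unfold V; nra).
  assert (Hbound : 0 < bound) by (apply Rmin_pos; nra).
  assert (Hbound_le : bound <= (sigma + mu) * dl /\ bound <= V 0 / 2)
    by (split; [apply Rmin_l | apply Rmin_r]).
  pose proof (exp_pos ((gamma + mu) * T)) as Hexp.
  exists (bound / exp ((gamma + mu) * T)).
  split; [apply Rdiv_lt_0_compat; assumption |].
  intros t Ht. apply Rnot_lt_le. intro Hsmall.
  apply Rlt_div_r in Hsmall; [| assumption].
  assert (Hwindow : forall u v, 0 <= u <= v -> v - u <= T -> v <= t ->
                      (forall x, v < x <= t -> c <= S x) -> V u < bound).
  { intros u v Huv HT Hvt HS.
    apply Rle_lt_trans with (V v * exp ((gamma + mu) * T));
      [apply V_backward_bound; assumption |].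
    apply Rle_lt_trans with (V t * exp ((gamma + mu) * T)); [| assumption].
    apply Rmult_le_compat_r; [lra | apply V_nondecreasing; [lra | assumption]]. }
  destruct (classic (exists s, 0 <= s <= t /\ S s - c <= 0)) as [Hdip | Hnodip].
  - destruct (last_nonpos_time (fun s => S s - c) 0 t) as [tau [Htau [HStau Hafter]]];
      [| exact Hdip |].
    { intros x Hx. apply (continuous_minus S (fun _ => c)); [| apply continuous_const].
      eapply derive_continuous, S_derive. lra. }
    assert (HSafter : forall x, tau < x <= t -> c <= S x)
      by (intros x Hx; specialize (Hafter x Hx); simpl in Hafter; lra).
    destruct (Rlt_le_dec tau T) as [HtauT | HTtau].
    + assert (V 0 < bound) by (apply (Hwindow 0 tau); lra || assumption). lra.
    + assert (HS : c < S (tau - T + T)).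
      { apply S_recovers; [lra | assumption | lra |].
        intros x Hx. change (tau - T < x <= tau - T + T) in Hx.
        assert (V x < bound) by (apply (Hwindow x tau); lra || assumption).
        destruct (SEI_positive x ltac:(lra)) as [_ [HEx HIx]].
        unfold V in *. nra. }
      replace (tau - T + T) with tau in HS by ring.
      simpl in HStau. lra.
  - assert (V 0 < bound); [| lra].
    apply (Hwindow 0 0); try lra.
    intros x Hx. apply Rnot_lt_le. intro HSx. apply Hnodip. exists x. split; lra.
Qed.

End SEI_system.

Theorem mainTheorem9 (N mu beta sigma gamma p rho : R)
  (hN : 0 < N) (hmu : 0 < mu) (hbeta : 0 < beta) (hsigma : 0 < sigma)
  (hgamma : 0 < gamma) (hp : 0 < p) (hrho0 : 0 < rho) (hrho1 : rho < 1)
  (hR0 : basic_repro_number N mu beta sigma gamma p rho > 1)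
  (S E I : R -> R)
  (hsol : is_SEI_solution N mu beta sigma gamma p rho S E I)
  (hinit : in_interior_Omega N (S 0) (E 0) (I 0)) :
  ~ omega_limit_point S E I (mu * N ^ 2 / (p + mu * N)) 0 0.
Proof.
  destruct hinit as [hS0 [hE0 [hI0 _]]].
  destruct (SEI_persistence N mu beta sigma gamma p rho hN hmu hbeta hsigma hgamma hp
              hrho1 S E I hsol hS0 hE0 hI0 hR0) as [eps [heps Hbound]].
  intros [tn [Htn [_ [HE HI]]]].
  assert (HV : is_lim_seq (fun n => sigma * E (tn n) + (sigma + mu) * I (tn n)) 0).
  { replace (Finite 0) with (Rbar_plus (Rbar_mult sigma 0) (Rbar_mult (sigma + mu) 0))
      by (simpl; f_equal; ring).
    apply is_lim_seq_plus'; apply (is_lim_seq_scal_l _ _ (Finite 0)); assumption. }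
  assert (Hev : eventually (fun n => eps <= sigma * E (tn n) + (sigma + mu) * I (tn n))).
  { apply (filter_imp (fun n => 0 <= tn n)); [intros n; apply Hbound |].
    apply Htn. exists 0. intros x Hx. lra. }
  pose proof (is_lim_seq_le_loc _ _ eps 0 Hev (is_lim_seq_const eps) HV) as Hle.
  simpl in Hle. lra.
Qed.
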